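(* For every $\gamma>0$ and every dislocation measure $\nu$, there exists a family $(q_n,n\geq1)$ of probability distributions, $q_n$ on $\mathcal{P}_n$, with $q_n((n))<1$ for every $n\geq1$, such that $n^\gamma(1-s_1)\overline{q}_n(\mathrm{d}\mathbf{s})\to(1-s_1)\nu(\mathrm{d}\mathbf{s})$ weakly as finite non-negative measures on $\mathcal{S}^{\downarrow}$ as $n\to\infty$.
   Context: $\mathcal{P}_n$ is the set of partitions of the integer $n$ (non-increasing sequences $\lambda$ of positive integers with sum $n$), and $\mathcal{P}_1=\{(1),\emptyset\}$. $\mathcal{S}^{\downarrow}=\{\mathbf{s}=(s_1,s_2,\dots):s_1\geq s_2\geq\dots\geq0,\sum s_i\leq1\}$ with the $\ell^1$ metric; $\overline{q}_n$ is the measure on $\mathcal{S}^{\downarrow}$ defined by $\overline{q}_n(f)=\sum_{\lambda\in\mathcal{P}_n}q_n(\lambda)f(\lambda/n)$. A dislocation measure is a $\sigma$-finite measure $\nu$ on $\mathcal{S}^{\downarrow}$ with $\nu(\{(1,0,\dots)\})=0$, $\nu(\sum_i s_i<1)=0$ and $\int(1-s_1)\nu(\mathrm{d}\mathbf{s})<\infty$. *)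

From HB Require Import structures.
From mathcomp Require Import all_boot all_order all_algebra.
From mathcomp Require Import all_classical all_reals all_analysis.
Set Implicit Arguments. Unset Strict Implicit. Unset Printing Implicit Defensive.
Import Order.TTheory GRing.Theory Num.Theory.
Import numFieldNormedType.Exports.
Local Open Scope classical_set_scope.
Local Open Scope ring_scope.

Section Sdown.
Variable R : realType.

Definition is_Sdown (s : nat -> R) : Prop :=
  (forall i, 0 <= s i.+1 <= s i) /\ (forall n, \sum_(i < n) s i <= 1).

Definition l1dist (s t : nat -> R) : \bar R :=
  (\sum_(i <oo) (`|s i - t i|)%:E)%E.

Record Sdown := MkSdown { sdval : nat -> R ; sdvalP : is_Sdown sdval }.

Lemma is_Sdown0 : is_Sdown (fun _ => 0).
Proof. split=> [i|n]; first by rewrite lexx. by rewrite big1 ?ler01. Qed.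

HB.instance Definition _ := gen_eqMixin Sdown.
HB.instance Definition _ := gen_choiceMixin Sdown.
HB.instance Definition _ := isPointed.Build Sdown (MkSdown is_Sdown0).

Definition Sdown_open : set (set Sdown) :=
  [set U | forall x, U x -> exists2 e : R, 0 < e &
     forall y : Sdown, (l1dist (sdval x) (sdval y) < e%:E)%E -> U y].

Definition SdownB : measurableType (sigma_display Sdown_open) :=
  g_sigma_algebraType Sdown_open.


Definition unit_seq : nat -> R := fun i => if i == 0%N then 1 else 0.

Definition dislocation_measure (nu : {measure set SdownB -> \bar R}) : Prop :=
  [/\ sigma_finite setT nu,
      nu [set s : SdownB | sdval s = unit_seq] = 0%E,
      nu [set s : SdownB | (\sum_(i <oo) (sdval s i)%:E < 1%:E)%E] = 0%E
    & (\int[nu]_s (1 - sdval s 0%N)%:E < +oo)%E].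

(* bounded functions on S^down that are continuous for the ell^1 metric;
   values outside S^down are irrelevant *)
Definition bdd_cont_Sdown (f : (nat -> R) -> R) : Prop :=
  (exists M : R, forall s, is_Sdown s -> `|f s| <= M) /\
  (forall s, is_Sdown s -> forall e : R, 0 < e -> exists2 d : R, 0 < d &
     forall t, is_Sdown t -> (l1dist s t < d%:E)%E -> `|f s - f t| < e).

(* lambda / n, as a sequence (padded with zeros) *)
Definition part_scale (n : nat) (l : seq nat) : nat -> R :=
  fun i => (nth 0%N l i)%:R / n%:R.

End Sdown.

Definition partitions (n : nat) : set (seq nat) :=
  [set l | (sorted geq l && all (fun k => 0 < k)%N l && (sumn l == n))
           \/ (n = 1%N /\ l = [::])].

From HB Require Import structures.
From mathcomp Require Import all_boot all_order all_algebra.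
From mathcomp Require Import all_classical all_reals all_analysis.
From mathcomp Require Import measurable_realfun.
From mathcomp Require Import ring lra.
Set Implicit Arguments. Unset Strict Implicit. Unset Printing Implicit Defensive.
Import Order.TTheory GRing.Theory Num.Theory.
Import numFieldNormedType.Exports.
Local Open Scope classical_set_scope.
Local Open Scope ring_scope.

(* The discretization [discretize n s] takes the integer parts of the [n s_i]
   and completes them with ones into a partition of [n]; coordinatewise it is
   within [1/n] of [n s], so when [sum_i s_i = 1] its rescaling converges to [s]
   in [l^1].  Let [q n] give to each partition [l] the mass
   [n^-gamma \int (1 - s_1) / (1 - l_1/n) 1{discretize n s = l} nu(ds)],
   restricted to the [l] with [1 - l_1/n >= eps n = n^(-gamma/2)].  Then
   [n^gamma \sum_l q n l (1 - l_1/n) f(l/n)] is exactly the integral of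
   [(1 - s_1) f(discretize n s / n)] over that region, which converges by
   dominated convergence since [nu]-almost every [s] has total mass one.  The
   cut-off bounds the total mass by [eps n \int (1 - s_1) d nu -> 0]; a mass
   [n^-gamma / n] on [(1,...,1)] has a vanishing contribution, and the rest is
   put on [(n)], which contributes nothing as [1 - n/n = 0]. *)

Section IntegerPartitions.
Local Open Scope nat_scope.

Definition positives (a : seq nat) := [seq x <- a | 0 < x].

Definition pad_ones (n : nat) (a : seq nat) :=
  positives a ++ nseq (n - sumn (positives a)) 1.

Lemma all_positives a : all (fun k => 0 < k) (positives a).
Proof. exact: filter_all. Qed.

Lemma sumn_positives a : sumn (positives a) = sumn a.
Proof. by elim: a => //= -[|x] a IH //=; rewrite IH. Qed.

Lemma sorted_positives a : sorted geq a -> sorted geq (positives a).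
Proof. by apply: sorted_filter => x y z /= yx zy; apply: leq_trans zy yx. Qed.

Lemma path_geq_nseq1 y k : 1 <= y -> path geq y (nseq k 1).
Proof. by elim: k y => //= k IH y ->; rewrite IH. Qed.

Lemma sorted_geq_cat_nseq1 a k : sorted geq a -> all (fun x => 0 < x) a ->
  sorted geq (a ++ nseq k 1).
Proof.
case: a => [|x a] sa pa; first by case: k => //= k; rewrite path_geq_nseq1.
rewrite /= cat_path (sa : path geq x a) path_geq_nseq1 //.
exact: (allP pa) _ (mem_last x a).
Qed.

Lemma pad_ones_partition n a : sorted geq a -> sumn a <= n ->
  [&& sorted geq (pad_ones n a), all (fun k => 0 < k) (pad_ones n a)
    & sumn (pad_ones n a) == n].
Proof.
move=> sa suma; apply/and3P; split.
- exact: sorted_geq_cat_nseq1 (sorted_positives sa) (all_positives a).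
- by rewrite all_cat all_positives; apply/allP => x /nseqP[->].
- by rewrite sumn_cat sumn_nseq mul1n sumn_positives subnKC.
Qed.

Lemma sorted_geq_nth (l : seq nat) i j : sorted geq l -> i <= j ->
  nth 0 l j <= nth 0 l i.
Proof.
move=> sl ij; case: (ltnP j (size l)) => [jl|]; last by move/(nth_default 0)->.
exact: (sorted_leq_nth (rev_trans leq_trans) leqnn 0 sl) (leq_ltn_trans ij jl) jl ij.
Qed.

Lemma size_positives_le a i : sorted geq a -> nth 0 a i = 0 -> size (positives a) <= i.
Proof.
move=> sa ai0; rewrite size_filter -(cat_take_drop i a) count_cat.
have -> : count (fun x => 0 < x) (drop i a) = 0.
  apply/eqP; rewrite eqn0Ngt -has_count; apply/hasPn => _ /(nthP 0)[j _ <-].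
  by rewrite nth_drop -leqNgt (leq_trans (sorted_geq_nth sa (leq_addr j i))) ?ai0.
by rewrite addn0 (leq_trans (count_size _ _)) // size_take_min geq_minl.
Qed.

Lemma nth_positives a i : sorted geq a -> 0 < nth 0 a i -> nth 0 (positives a) i = nth 0 a i.
Proof.
move=> sa ai_gt0; have ia : i < size a.
  by rewrite ltnNge; apply: contraTN ai_gt0 => /(nth_default 0)->.
rewrite /positives -{1}(cat_take_drop i.+1 a) filter_cat.
have /all_filterP -> : all (fun x => 0 < x) (take i.+1 a).
  apply/(all_nthP 0) => j; rewrite size_takel // => ji; rewrite nth_take //.
  exact: leq_trans ai_gt0 (sorted_geq_nth sa _).
by rewrite nth_cat size_takel // ltnSn nth_take.
Qed.

Lemma nth_pad_ones n a i : sorted geq a ->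
  (0 < nth 0 a i /\ nth 0 (pad_ones n a) i = nth 0 a i) \/
  (nth 0 a i = 0 /\ nth 0 (pad_ones n a) i <= 1).
Proof.
move=> sa; case: (posnP (nth 0 a i)) => ai.
  right; split => //; rewrite /pad_ones nth_cat ltnNge size_positives_le //=.
  by rewrite nth_nseq; case: ifP.
left; split => //; rewrite /pad_ones nth_cat nth_positives //.
case: ltnP => // /(nth_default 0); rewrite nth_positives // => ai0.
by move: ai; rewrite ai0.
Qed.

Lemma nth_le_sumn (l : seq nat) i : nth 0 l i <= sumn l.
Proof.
elim: l i => [|x l IH] [|i] //=; first exact: leq_addr.
exact: leq_trans (IH i) (leq_addl _ _).
Qed.

Lemma sum_nth_le_sumn (l : seq nat) m : \sum_(i < m) nth 0 l i <= sumn l.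
Proof.
elim: l m => [|x l IH] [|m] /=; rewrite ?big_ord0 //.
  by rewrite big1 // => i _; rewrite nth_nil.
by rewrite big_ord_recl leq_add2l; apply: IH.
Qed.

Lemma size_le_sumn (l : seq nat) : all (fun k => 0 < k) l -> size l <= sumn l.
Proof. by elim: l => //= x l IH /andP[x_gt0 /IH]; rewrite -add1n; apply: leq_add. Qed.

Lemma positives_map_nth l m : all (fun k => 0 < k) l -> size l <= m ->
  positives (map (nth 0 l) (iota 0 m)) = l.
Proof.
move=> pl lm; rewrite -(subnKC lm) iotaD map_cat /positives filter_cat.
rewrite -/(mkseq _ _) mkseq_nth (all_filterP pl) (@eq_in_filter _ _ pred0).
  by rewrite filter_pred0 cats0.
by move=> x /mapP[k]; rewrite mem_iota add0n => /andP[lk _] ->; rewrite nth_default.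
Qed.

(* A partition of [n] is recovered from its first [n + 1] entries, each at most [n]. *)
Definition partition_code n (g : {ffun 'I_n.+1 -> 'I_n.+1}) : seq nat :=
  positives [seq val (g i) | i <- enum 'I_n.+1].

Lemma partitions_finite n : finite_set (partitions n).
Proof.
apply: (sub_finite_set (B := @partition_code n @` setT)); last first.
  exact: finite_image finite_finset.
move=> l pl; have [pos_l sum_l] : all (fun k => 0 < k) l /\ sumn l <= n.
  by case: pl => [/andP[/andP[_ ->] /eqP ->]|[-> ->]].
have size_l : size l <= n.+1 by rewrite (leq_trans (size_le_sumn pos_l)) ?(leq_trans sum_l).
exists [ffun i : 'I_n.+1 => inord (nth 0 l i)] => //.
rewrite /partition_code -[RHS](positives_map_nth pos_l size_l) -val_enum_ord -map_comp.
congr positives; apply: eq_map => i /=.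
by rewrite ffunE inordK // ltnS (leq_trans (nth_le_sumn _ _)).
Qed.

Definition ones n := nseq n 1.

Lemma ones_partition n : 1 <= n -> partitions n (ones n).
Proof.
case: n => // n _; left; rewrite sumn_nseq mul1n eqxx andbT.
by rewrite [sorted _ _]path_geq_nseq1 //=; apply/allP => x /nseqP[->].
Qed.

Lemma singleton_partition n : 1 <= n -> partitions n [:: n].
Proof. by move=> n_gt0; left; rewrite /= n_gt0 addn0 eqxx. Qed.

End IntegerPartitions.

Section SdownFacts.
Variable R : realType.
Local Notation T := (SdownB R).

Lemma sdval_ge0 (s : Sdown R) i : 0 <= sdval s i.
Proof.
have [mono _] := sdvalP s; case: i => [|i]; last by case/andP: (mono i).
by case/andP: (mono 0%N) => /le_trans; apply.
Qed.

Lemma sdval_sum_le1 (s : Sdown R) m : \sum_(i < m) sdval s i <= 1.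
Proof. by have [_] := sdvalP s. Qed.

Lemma sdval_le1 (s : Sdown R) i : sdval s i <= 1.
Proof.
apply: le_trans (sdval_sum_le1 s i.+1); rewrite big_ord_recr /= lerDr.
by apply: sumr_ge0 => j _; apply: sdval_ge0.
Qed.

Lemma sdval_nonincreasing (s : Sdown R) i j : (i <= j)%N -> sdval s j <= sdval s i.
Proof.
have [mono _] := sdvalP s; elim: j => [|j IH]; first by rewrite leqn0 => /eqP->.
rewrite leq_eqVlt => /orP[/eqP->//|]; rewrite ltnS => /IH; apply: le_trans.
by case/andP: (mono j).
Qed.

Lemma sdval_le_inv (s : Sdown R) i : sdval s i <= i.+1%:R^-1.
Proof.
rewrite -[X in _ <= X]mul1r ler_pdivlMr // mulrC mulr_natl.
rewrite -(card_ord i.+1) -sumr_const; apply: le_trans (sdval_sum_le1 s i.+1).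
by apply: ler_sum => j _; rewrite sdval_nonincreasing // -ltnS.
Qed.

Lemma dist_le_l1dist (x y : nat -> R) i : ((`|x i - y i|)%:E <= l1dist x y)%E.
Proof.
apply: le_trans (nneseries_lim_ge i.+1 _) => //.
by rewrite big_nat_recr //= leeDr // sume_ge0.
Qed.

Definition l1_continuous (F : T -> R) := forall x e, 0 < e -> exists2 d : R, 0 < d &
  forall y : T, (l1dist (sdval x) (sdval y) < d%:E)%E -> `|F x - F y| < e.

Lemma measurable_l1_continuous (F : T -> R) : l1_continuous F -> measurable_fun setT F.
Proof.
move=> Fc; apply: (measurability _ (RGenOInfty.measurableE R)) => //.
move=> /= _ [_ [a ->] <-]; rewrite setTI preimage_itvoy.
apply: sub_sigma_algebra => x /= ax.
have [d d_gt0 Fd] := Fc x (F x - a) (ltac:(by rewrite subr_gt0)).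
exists d => // y /Fd; rewrite ltr_norml => /andP[_ ?]; lra.
Qed.

Lemma measurable_coord i : measurable_fun setT (fun s : T => sdval s i).
Proof.
apply: measurable_l1_continuous => x e e_gt0; exists e => // y xy.
by rewrite -lte_fin (le_lt_trans _ xy) ?dist_le_l1dist.
Qed.

Lemma measurable_loss : measurable_fun setT (fun s : T => 1 - sdval s 0%N).
Proof. exact: measurable_funB (measurable_coord 0). Qed.

Lemma loss_ge0 (s : Sdown R) : 0 <= 1 - sdval s 0%N.
Proof. by rewrite subr_ge0 sdval_le1. Qed.

Lemma Sdown_open_mass_lt1 :
  Sdown_open [set s : Sdown R | (\sum_(i <oo) (sdval s i)%:E < 1%:E)%E].
Proof.
move=> x /= x_lt1; have x_ge0 : (0 <= \sum_(i <oo) (sdval x i)%:E)%E.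
  by apply: nneseries_ge0 => i _ _; rewrite lee_fin sdval_ge0.
have x_fin : (\sum_(i <oo) (sdval x i)%:E)%E \is a fin_num.
  by rewrite ge0_fin_numE // (lt_le_trans x_lt1) // leey.
set r := fine (\sum_(i <oo) (sdval x i)%:E)%E.
have r_E : (\sum_(i <oo) (sdval x i)%:E)%E = r%:E by rewrite fineK.
rewrite r_E lte_fin in x_lt1; exists (1 - r); first by rewrite subr_gt0.
move=> y xy /=; apply: (@le_lt_trans _ _
    (\sum_(i <oo) ((sdval x i)%:E + (`|sdval x i - sdval y i|)%:E))%E).
  apply: lee_nneseries => [i _ _|i _]; first by rewrite lee_fin sdval_ge0.
  by rewrite -EFinD lee_fin -lerBlDl -normrN opprB ler_norm.
rewrite nneseriesD => [|i _ _|i _ _]; rewrite ?lee_fin ?sdval_ge0 //.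
have one_E : 1%E = (r%:E + (1 - r)%:E)%E by rewrite -EFinD addrC subrK.
by rewrite r_E one_E lteD2lE.
Qed.

Lemma measurable_fibres_pred (C : countType) (h : T -> C) (P : C -> Prop) :
  (forall c, measurable [set s | h s = c]) -> measurable [set s | P (h s)].
Proof.
move=> mh; have -> : [set s | P (h s)] = \bigcup_(c : C) ([set s | h s = c] `&` [set _ | P c]).
  apply/seteqP; split => s /=.
    by move=> Ps; exists (h s).
  by case=> c _ [/= ->].
apply: countable_bigcupT_measurable; first exact: countableP.
move=> c; apply: measurableI => //; have [Pc|nPc] := pselect (P c).
  by have -> : [set _ : T | P c] = setT by apply/seteqP; split=> // s _.
by have -> : [set _ : T | P c] = set0 by apply/seteqP; split=> // s.
Qed.

Lemma measurable_fun_fibres (C : countType) (h : T -> C) (G : C -> R) :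
  (forall c, measurable [set s | h s = c]) -> measurable_fun setT (G \o h).
Proof.
move=> mh _ Y _; rewrite setTI.
exact: (measurable_fibres_pred (fun c => Y (G c)) mh).
Qed.

End SdownFacts.

Section Discretization.
Variable R : realType.
Local Notation T := (SdownB R).

Definition floor_seq n (s : Sdown R) := [seq Num.truncn (n%:R * sdval s i) | i <- iota 0 n].

Definition discretize n (s : Sdown R) := pad_ones n (floor_seq n s).

Lemma floor_seq_sorted n s : sorted geq (floor_seq n s).
Proof.
apply: (homo_sorted (e := leq)); last exact: iota_sorted.
by move=> i j ij /=; apply/le_truncn/ler_wpM2l => //; apply: sdval_nonincreasing.
Qed.

Lemma nth_floor_seq n s i :
  nth 0%N (floor_seq n s) i = if (i < n)%N then Num.truncn (n%:R * sdval s i) else 0%N.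
Proof.
case: ltnP => ni; first by rewrite (nth_map 0%N) ?size_iota // nth_iota.
by rewrite nth_default // size_map size_iota.
Qed.

Lemma sumn_floor_seq_le n s : (sumn (floor_seq n s) <= n)%N.
Proof.
rewrite -(ler_nat R) sumnE big_map natr_sum.
apply: le_trans (_ : \sum_(i <- iota 0 n) n%:R * sdval s i <= _).
  by apply: ler_sum => i _; rewrite truncn_le mulr_ge0 // sdval_ge0.
rewrite -mulr_sumr -[X in _ <= X]mulr1 ler_wpM2l //.
have -> : iota 0 n = index_iota 0 n by rewrite /index_iota subn0.
by rewrite big_mkord sdval_sum_le1.
Qed.

Lemma discretize_partition n s : partitions n (discretize n s).
Proof.
have := pad_ones_partition (floor_seq_sorted n s) (sumn_floor_seq_le n s).
by case/and3P=> sd pos sum; left; rewrite sd pos sum.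
Qed.

Lemma part_scale_ge0 n l i : 0 <= part_scale R n l i.
Proof. by rewrite divr_ge0. Qed.

Lemma part_scale_Sdown n l : sorted geq l -> (sumn l <= n)%N -> is_Sdown (part_scale R n l).
Proof.
case: n => [|n] sl ln.
  have -> : part_scale R 0 l = fun _ => 0 by apply: funext => i; rewrite /part_scale invr0 mulr0.
  exact: is_Sdown0.
split => [i|m]; first rewrite part_scale_ge0 /=.
  by rewrite ler_wpM2r ?invr_ge0 // ler_nat sorted_geq_nth.
rewrite /part_scale -mulr_suml -natr_sum ler_pdivrMr ?ltr0n // mul1r ler_nat.
exact: leq_trans (sum_nth_le_sumn _ _) ln.
Qed.

Lemma partition_scale_Sdown n l : partitions n l -> is_Sdown (part_scale R n l).
Proof.
case=> [/andP[/andP[sl _] /eqP ln]|[_ ->]]; apply: part_scale_Sdown => //.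
by rewrite ln.
Qed.

Lemma discretize_Sdown n s : is_Sdown (part_scale R n (discretize n s)).
Proof. exact/partition_scale_Sdown/discretize_partition. Qed.

Lemma discretize_cases n (s : Sdown R) i : (0 < n)%N ->
  (part_scale R n (discretize n s) i <= sdval s i /\
   sdval s i - part_scale R n (discretize n s) i <= n%:R^-1) \/
  (sdval s i <= n%:R^-1 /\ part_scale R n (discretize n s) i <= n%:R^-1).
Proof.
move=> n_gt0; have n_pos : 0 < n%:R :> R by rewrite ltr0n.
have /andP[lo hi] := truncn_itv (mulr_ge0 (ler0n R n) (sdval_ge0 s i)).
rewrite /part_scale /discretize.
case: (nth_pad_ones n i (floor_seq_sorted n s)) => [[b_gt0 ->]|[b0 t_le1]].
  left; move: b_gt0; rewrite nth_floor_seq; case: (ltnP i n) => // _ _.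
  split; first by rewrite ler_pdivrMr // [sdval s i * _]mulrC.
  rewrite lerBlDl -[X in _ + X]mul1r -mulrDl natr1 ler_pdivlMr // [sdval s i * _]mulrC.
  exact: ltW.
right; split; last by rewrite ler_pdivrMr // mulVf ?gt_eqF // lern1.
move: b0; rewrite nth_floor_seq; case: (ltnP i n) => ni.
  move=> b0; rewrite b0 in hi.
  by rewrite -[X in _ <= X]mul1r ler_pdivlMr // [sdval s i * _]mulrC ltW.
move=> _; apply: le_trans (sdval_le_inv s i) _.
by rewrite lef_pV2 ?posrE ?ltr0n // ler_nat leqW.
Qed.

Lemma discretize_close n (s : Sdown R) i : (0 < n)%N ->
  `|sdval s i - part_scale R n (discretize n s) i| <= n%:R^-1.
Proof.
move=> n_gt0; have t_ge0 := part_scale_ge0 n (discretize n s) i.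
have s_ge0 := sdval_ge0 s i; rewrite ler_norml.
by case: (discretize_cases s i n_gt0) => -[? ?]; apply/andP; split; lra.
Qed.

Lemma discretize_loss_ge n (s : Sdown R) e : (0 < n)%N ->
  e <= 1 - sdval s 0%N -> e <= 1 - n%:R^-1 ->
  e <= 1 - part_scale R n (discretize n s) 0%N.
Proof. by move=> n_gt0 ? ?; case: (discretize_cases s 0 n_gt0) => -[? ?]; lra. Qed.

End Discretization.

Section DiscretizationLimit.
Variable R : realType.
Local Notation T := (SdownB R).

Lemma measurable_truncn_fibre n i k :
  measurable [set s : T | Num.truncn (n%:R * sdval s i) = k].
Proof.
have m_ns : measurable_fun setT (fun s : T => n%:R * sdval s i).
  exact: measurableT_comp (measurable_coord i).
rewrite (_ : [set s | _] = setT `&` (fun s : T => n%:R * sdval s i) @^-1` `[k%:R, k.+1%:R[).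
  exact: m_ns measurableT _ (measurable_itv _).
have ns_ge0 (s : T) : 0 <= n%:R * sdval s i by rewrite mulr_ge0 ?sdval_ge0.
apply/seteqP; split => s /=; first by move=> <-; split => //; rewrite in_itv /= truncn_itv.
by move=> [_]; rewrite in_itv /= => ?; apply/eqP; rewrite truncn_eq.
Qed.

Lemma measurable_floor_seq_fibre n b : measurable [set s : T | floor_seq n s = b].
Proof.
have [sb|nb] := eqVneq (size b) n; last first.
  rewrite (_ : [set s | _] = set0) //; apply/seteqP; split => s //= sb_eq.
  by move: nb; rewrite -sb_eq size_map size_iota eqxx.
rewrite (_ : [set s | _] = \bigcap_(i in [set i | (i < n)%N])
   [set s : T | Num.truncn (n%:R * sdval s i) = nth 0%N b i]).
  by apply: bigcap_measurableType => i _; apply: measurable_truncn_fibre.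
apply/seteqP; split => s /=; first by move=> <- i /= ni; rewrite nth_floor_seq ni.
move=> sb_eq; apply: (@eq_from_nth _ 0%N); first by rewrite size_map size_iota sb.
by move=> i; rewrite size_map size_iota => ni; rewrite nth_floor_seq ni; apply: sb_eq.
Qed.

Lemma measurable_discretize_fibre n l : measurable [set s : T | discretize n s = l].
Proof.
exact: (measurable_fibres_pred (fun b => pad_ones n b = l) (@measurable_floor_seq_fibre n)).
Qed.

Lemma measurable_loss_discretize n (G : seq nat -> R) :
  measurable_fun setT (fun s : T => ((1 - sdval s 0%N) * G (discretize n s))%:E).
Proof.
apply/measurable_EFinP/measurable_funM; first exact: measurable_loss.
exact: (measurable_fun_fibres G (@measurable_discretize_fibre n)).
Qed.

Lemma div_nat_lt (c a : R) : 0 < a -> \forall n \near \oo, c / n%:R < a.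
Proof.
move=> a_gt0; exists (Num.truncn (`|c| / a)).+1 => // n /= cn.
have n_pos : 0 < n%:R :> R by rewrite ltr0n (leq_trans _ cn).
have : `|c| / a < n%:R by apply: lt_le_trans (truncnS_gt _) _; rewrite ler_nat.
rewrite ltr_pdivrMr // ltr_pdivrMr // => ca; have := ler_norm c; nra.
Qed.

Lemma Sdown_tail_le (u : nat -> R) N M : is_Sdown u ->
  \sum_(N <= i < M) u i <= 1 - \sum_(0 <= i < N) u i.
Proof.
move=> [_ u_le1]; rewrite lerBrDr; case: (leqP N M) => [NM|MN].
  by rewrite addrC -big_cat_nat //= big_mkord u_le1.
by rewrite big_geq ?(ltnW MN) // add0r big_mkord u_le1.
Qed.

Lemma l1dist_discretize_le (s : Sdown R) n N eta : (0 < n)%N ->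
  1 - eta < \sum_(0 <= i < N) sdval s i ->
  (l1dist (sdval s) (part_scale R n (discretize n s)) <= (2 * (N%:R / n%:R) + 2 * eta)%:E)%E.
Proof.
move=> n_gt0 sN; set t := part_scale R n (discretize n s).
have head : \sum_(0 <= i < N) `|sdval s i - t i| <= N%:R / n%:R.
  apply: le_trans (_ : \sum_(0 <= i < N) n%:R^-1 <= _).
    by apply: ler_sum => i _; apply: discretize_close.
  by rewrite sumr_const_nat subn0 -(mulr_natl n%:R^-1 N).
have head_t : \sum_(0 <= i < N) sdval s i - \sum_(0 <= i < N) t i <= N%:R / n%:R.
  by apply: le_trans head; rewrite -sumrB; apply: ler_sum => i _; apply: ler_norm.
have tail M : \sum_(N <= i < M) `|sdval s i - t i| <=
    (1 - \sum_(0 <= i < N) sdval s i) + (1 - \sum_(0 <= i < N) t i).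
  apply: le_trans (_ : \sum_(N <= i < M) (sdval s i + t i) <= _).
    apply: ler_sum => i _; apply: le_trans (ler_normB _ _) _.
    by rewrite !ger0_norm ?sdval_ge0 ?part_scale_ge0.
  by rewrite big_split; apply: lerD; apply: Sdown_tail_le; [apply: sdvalP|apply: discretize_Sdown].
apply: lime_le; first by apply: is_cvg_nneseries => i _ _; rewrite lee_fin normr_ge0.
apply: nearW => M; rewrite sumEFin lee_fin.
apply: le_trans (_ : \sum_(0 <= i < maxn M N) `|sdval s i - t i| <= _).
  rewrite (big_cat_nat (leq0n M) (leq_maxl M N)) /= lerDl.
  by apply: sumr_ge0 => i _.
by rewrite (big_cat_nat (leq0n N) (leq_maxr M N)) /=; have := tail (maxn M N); lra.
Qed.

Lemma partial_sum_gt (s : Sdown R) eta : 0 < eta ->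
  ~ (\sum_(i <oo) (sdval s i)%:E < 1%:E)%E ->
  exists N, 1 - eta < \sum_(0 <= i < N) sdval s i.
Proof.
move=> eta_gt0 s1; apply: contrapT => sN; apply: s1.
apply: (@le_lt_trans _ _ (1 - eta)%:E); last by rewrite lte_fin; lra.
apply: lime_le; first by apply: is_cvg_nneseries => i _ _; rewrite lee_fin sdval_ge0.
by apply: nearW => M; rewrite sumEFin lee_fin leNgt; apply/negP => ?; apply: sN; exists M.
Qed.

Lemma l1dist_discretize_cvg (s : Sdown R) :
  ~ (\sum_(i <oo) (sdval s i)%:E < 1%:E)%E -> forall d, 0 < d ->
  \forall n \near \oo, (l1dist (sdval s) (part_scale R n (discretize n s)) < d%:E)%E.
Proof.
move=> s1 d d_gt0; have [N sN] := partial_sum_gt (divr_gt0 d_gt0 (ltr0n R 8)) s1.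
near=> n; have n_gt0 : (0 < n)%N by near: n; exists 1%N.
have Nn : N%:R / n%:R < d / 8 by near: n; apply: div_nat_lt; rewrite divr_gt0.
by apply: le_lt_trans (l1dist_discretize_le n_gt0 sN) _; rewrite lte_fin; lra.
Unshelve. all: by end_near.
Qed.

Definition cutoff (f : (nat -> R) -> R) (e : R) n l :=
  if e <= 1 - part_scale R n l 0%N then f (part_scale R n l) else 0.

Lemma cutoff_discretize_cvg (f : (nat -> R) -> R) (eps : nat -> R) (s : Sdown R) :
  bdd_cont_Sdown f -> (forall a, 0 < a -> \forall n \near \oo, eps n <= a) ->
  ~ (\sum_(i <oo) (sdval s i)%:E < 1%:E)%E ->
  (fun n => (1 - sdval s 0%N) * cutoff f (eps n) n (discretize n s)) @ \oo -->
  (1 - sdval s 0%N) * f (sdval s).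
Proof.
move=> [_ f_cont] eps_small s1; apply/cvgrPdist_lt => e e_gt0.
have [s0_1|s0_lt1] := eqVneq (sdval s 0%N) 1.
  by near=> n; rewrite s0_1 subrr !mul0r subrr normr0.
have loss_gt0 : 0 < 1 - sdval s 0%N by rewrite subr_gt0 lt_neqAle s0_lt1 sdval_le1.
have [d d_gt0 fd] := f_cont _ (sdvalP s) e e_gt0.
near=> n; have n_ge2 : (2 <= n)%N by near: n; exists 2%N.
have cut : eps n <= 1 - part_scale R n (discretize n s) 0%N.
  apply: discretize_loss_ge; first exact: ltnW.
    by near: n; apply: eps_small.
  have : n%:R^-1 <= 2^-1 :> R by rewrite lef_pV2 ?posrE ?ltr0n ?(ltnW n_ge2) // ler_nat.
  have : eps n <= 2^-1 by near: n; apply: eps_small; rewrite invr_gt0.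
  lra.
rewrite /cutoff cut -mulrBr normrM (ger0_norm (ltW loss_gt0)).
apply: le_lt_trans (fd _ (discretize_Sdown n s) _); last first.
  by near: n; apply: l1dist_discretize_cvg.
by rewrite ler_piMl ?normr_ge0 //; have := sdval_ge0 s 0; lra.
Unshelve. all: by end_near.
Qed.

End DiscretizationLimit.

Lemma sum_seq_pick (T : eqType) (R : nzRingType) (r : seq T) x (c : T -> R) :
  x \in r -> uniq r -> \sum_(l <- r) (x == l)%:R * c l = c x.
Proof.
move=> xr ur; rewrite (bigD1_seq x) //= eqxx mul1r big1 ?addr0 // => l.
by rewrite eq_sym => /negbTE ->; rewrite mul0r.
Qed.

Definition partitions_seq n : seq (seq nat) := finmap.enum_fset (fset_set (partitions n)).

Lemma partitions_seq_uniq n : uniq (partitions_seq n).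
Proof. exact: finmap.fset_uniq. Qed.

Lemma mem_partitions_seq n l : (l \in partitions_seq n) = `[< partitions n l >].
Proof.
rewrite /partitions_seq in_fset_set; last exact: partitions_finite.
by apply/idP/asboolP => [/set_mem|/mem_set].
Qed.

Lemma partitions_seqP n l : partitions n l -> l \in partitions_seq n.
Proof. by rewrite mem_partitions_seq => /asboolP. Qed.

Lemma fsbig_partitions (R : nmodType) n (F : seq nat -> R) :
  \sum_(l \in partitions n) F l = \sum_(l <- partitions_seq n) F l.
Proof. by rewrite fsbig_finite //; apply: partitions_finite. Qed.

Section CellWeights.
Variable R : realType.
Local Notation T := (SdownB R).
Variable nu : {measure set T -> \bar R}.

Definition cell_weight n l :=
  fine (\int[nu]_s ((1 - sdval s 0%N) * (discretize n s == l)%:R)%:E)%E.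

Lemma cell_weight_ge0 n l : 0 <= cell_weight n l.
Proof. by apply/fine_ge0/integral_ge0 => s _; rewrite lee_fin mulr_ge0 ?loss_ge0. Qed.

Hypothesis loss_integral_finite : (\int[nu]_s (1 - sdval s 0%N)%:E < +oo)%E.

Lemma integrable_loss : nu.-integrable setT (fun s => (1 - sdval s 0%N)%:E).
Proof.
apply/integrableP; split; first by apply/measurable_EFinP; apply: measurable_loss.
under eq_integral do rewrite abse_EFin ger0_norm ?loss_ge0 //.
exact: loss_integral_finite.
Qed.

Lemma integrable_loss_discretize n (G : seq nat -> R) B : (forall l, `|G l| <= B) ->
  nu.-integrable setT (fun s : T => ((1 - sdval s 0%N) * G (discretize n s))%:E).
Proof.
move=> G_le; apply: (le_integrable measurableT (measurable_loss_discretize n G) _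
  (integrableZl measurableT B integrable_loss)) => s _.
rewrite -EFinM !abse_EFin lee_fin !normrM mulrC ler_wpM2r //.
exact: le_trans (G_le _) (ler_norm _).
Qed.

Lemma integral_loss_discretize n (c : seq nat -> R) :
  (\sum_(l <- partitions_seq n) c l * cell_weight n l)%:E =
  (\int[nu]_s ((1 - sdval s 0%N) * c (discretize n s))%:E)%E.
Proof.
have cell_int l : nu.-integrable setT
    (fun s : T => ((1 - sdval s 0%N) * (discretize n s == l)%:R)%:E).
  apply: (@integrable_loss_discretize n (fun k => (k == l)%:R) 1) => k.
  by case: (k == l); rewrite ?normr1 ?normr0.
transitivity (\int[nu]_s (\sum_(l <- partitions_seq n)
    ((1 - sdval s 0%N) * ((discretize n s == l)%:R * c l))%:E))%E; last first.
  apply: eq_integral => s _; rewrite sumEFin -mulr_sumr sum_seq_pick //.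
    exact/partitions_seqP/discretize_partition.
  exact: partitions_seq_uniq.
rewrite integral_sum //; last first.
  move=> l; apply: (@integrable_loss_discretize n (fun k => (k == l)%:R * c l) `|c l|) => k.
  by case: (k == l); rewrite ?mul1r ?mul0r ?normr0.
rewrite -sumEFin; apply: eq_bigr => l _.
transitivity (\int[nu]_s ((c l)%:E * ((1 - sdval s 0%N) * (discretize n s == l)%:R)%:E))%E.
  by rewrite integralZl // /cell_weight EFinM fineK //; apply: integrable_fin_num.
by apply: eq_integral => s _; rewrite -EFinM; congr EFin; ring.
Qed.

Lemma cutoff_integral_cvg (f : (nat -> R) -> R) (eps : nat -> R) :
  bdd_cont_Sdown f -> (forall a, 0 < a -> \forall n \near \oo, eps n <= a) ->
  nu [set s : T | (\sum_(i <oo) (sdval s i)%:E < 1%:E)%E] = 0%E ->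
  (fun n => \int[nu]_s ((1 - sdval s 0%N) * cutoff f (eps n) n (discretize n s))%:E)%E
  @ \oo --> (\int[nu]_s ((1 - sdval s 0%N) * f (sdval s))%:E)%E.
Proof.
move=> f_bdd_cont eps_small mass_lt1_null; have [[M f_le] f_cont] := f_bdd_cont.
have mf : measurable_fun setT (fun s : T => ((1 - sdval s 0%N) * f (sdval s))%:E).
  apply/measurable_EFinP/measurable_funM; first exact: measurable_loss.
  apply: measurable_l1_continuous => x e e_gt0.
  have [d d_gt0 fd] := f_cont _ (sdvalP x) e e_gt0.
  by exists d => // y; apply: fd (sdvalP y).
have dom : {ae nu, forall s n, setT s ->
    (`|((1 - sdval s 0%N) * cutoff f (eps n) n (discretize n s))%:E| <=
     (`|M| * (1 - sdval s 0%N))%:E)%E}.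
  apply: aeW => s n _; rewrite abse_EFin lee_fin normrM ger0_norm ?loss_ge0 //.
  rewrite mulrC ler_wpM2r ?loss_ge0 // /cutoff; case: ifP => _; last by rewrite normr0.
  exact: le_trans (f_le _ (discretize_Sdown n s)) (ler_norm _).
have pointwise : {ae nu, forall s, setT s ->
    (fun n => ((1 - sdval s 0%N) * cutoff f (eps n) n (discretize n s))%:E) @ \oo -->
    ((1 - sdval s 0%N) * f (sdval s))%:E}.
  exists [set s : T | (\sum_(i <oo) (sdval s i)%:E < 1%:E)%E]; split => //.
    by apply: sub_sigma_algebra; apply: Sdown_open_mass_lt1.
  move=> s /= s_bad; apply: contrapT => s1; apply: s_bad => _.
  by apply/fine_cvgP; split; [apply: nearW | apply: cutoff_discretize_cvg].
have [_ _ //] := dominated_convergence measurableT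
  (fun n => measurable_loss_discretize n _) mf pointwise
  (integrableZl measurableT `|M| integrable_loss) dom.
Qed.

End CellWeights.

Section Construction.
Variable R : realType.
Variable gamma : R.
Hypothesis gamma_gt0 : 0 < gamma.
Variable nu : {measure set (SdownB R) -> \bar R}.
Hypothesis loss_integral_finite : (\int[nu]_s (1 - sdval s 0%N)%:E < +oo)%E.

Definition rate n := n%:R `^ gamma.
Definition eps n := Num.sqrt (rate n)^-1.

Lemma rate_gt0 n : (0 < n)%N -> 0 < rate n.
Proof. by move=> n_gt0; rewrite powR_gt0 // ltr0n. Qed.

Lemma eps_gt0 n : (0 < n)%N -> 0 < eps n.
Proof. by move=> n_gt0; rewrite sqrtr_gt0 invr_gt0 rate_gt0. Qed.

Lemma rate_inv_sqr n : (0 < n)%N -> (rate n)^-1 = eps n * eps n.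
Proof. by move=> n_gt0; rewrite -expr2 sqr_sqrtr // invr_ge0 ltW ?rate_gt0. Qed.

Lemma rate_inv_small a : 0 < a -> \forall n \near \oo, (rate n)^-1 <= a.
Proof.
move=> a_gt0; exists (Num.truncn (a^-1 `^ gamma^-1)).+1 => // n /= an.
have n_gt0 : (0 < n)%N by apply: leq_trans an.
rewrite -[X in _ <= X]invrK lef_pV2 ?posrE ?invr_gt0 ?rate_gt0 //.
have an' : a^-1 `^ gamma^-1 < n%:R.
  by apply: lt_le_trans (truncnS_gt _) _; rewrite ler_nat.
have : (a^-1 `^ gamma^-1) `^ gamma < n%:R `^ gamma.
  by apply: gt0_ltr_powR; rewrite ?nnegrE ?powR_ge0 ?ler0n.
rewrite -powRrM mulVf ?gt_eqF // powRr1 => [|]; last by rewrite invr_ge0 ltW.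
exact: ltW.
Qed.

Lemma eps_small a : 0 < a -> \forall n \near \oo, eps n <= a.
Proof.
move=> a_gt0; apply: filterS (rate_inv_small (mulr_gt0 a_gt0 a_gt0)) => n rn.
have r_ge0 : 0 <= (rate n)^-1 by rewrite invr_ge0 powR_ge0.
have := sqr_sqrtr r_ge0; have := sqrtr_ge0 (rate n)^-1; rewrite /eps expr2; nra.
Qed.

Definition cut_inv_loss n l :=
  if eps n <= 1 - part_scale R n l 0%N then (1 - part_scale R n l 0%N)^-1 else 0.
Definition main_mass n l := (rate n)^-1 * (cut_inv_loss n l * cell_weight nu n l).
Definition total_main_mass n := \sum_(l <- partitions_seq n) main_mass n l.
Definition ones_mass n := (rate n)^-1 / n%:R.
Definition admissible n := (2 <= n)%N && (total_main_mass n + ones_mass n < 1).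
(* Used for the finitely many non-admissible [n]: a point mass away from [[:: n]]. *)
Definition fallback n := if (2 <= n)%N then ones n else [::].

Definition q n l : R :=
  if `[< partitions n l >] then
    if admissible n then
      main_mass n l + (ones n == l)%:R * ones_mass n
      + ([:: n] == l)%:R * (1 - total_main_mass n - ones_mass n)
    else (fallback n == l)%:R
  else 0.

Lemma cut_inv_loss_ge0 n l : (0 < n)%N -> 0 <= cut_inv_loss n l.
Proof.
move=> n_gt0; rewrite /cut_inv_loss; case: ifP => // cut.
by rewrite invr_ge0 (le_trans (ltW (eps_gt0 n_gt0))).
Qed.

Lemma cut_inv_loss_le n l : (0 < n)%N -> cut_inv_loss n l <= (eps n)^-1.
Proof.
move=> n_gt0; have e_gt0 := eps_gt0 n_gt0; rewrite /cut_inv_loss.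
case: ifP => cut; last by rewrite invr_ge0 ltW.
by rewrite lef_pV2 ?posrE // (lt_le_trans e_gt0 cut).
Qed.

Lemma main_mass_ge0 n l : (0 < n)%N -> 0 <= main_mass n l.
Proof.
move=> n_gt0; rewrite /main_mass !mulr_ge0 ?cut_inv_loss_ge0 ?cell_weight_ge0 //.
by rewrite invr_ge0 ltW ?rate_gt0.
Qed.

Lemma main_mass_singleton n : (0 < n)%N -> main_mass n [:: n] = 0.
Proof.
move=> n_gt0; rewrite /main_mass /cut_inv_loss /part_scale /= mulfV ?gt_eqF ?ltr0n //.
by rewrite subrr leNgt eps_gt0 //= mul0r mulr0.
Qed.

Lemma total_main_mass_ge0 n : (0 < n)%N -> 0 <= total_main_mass n.
Proof. by move=> n_gt0; apply: sumr_ge0 => l _; apply: main_mass_ge0. Qed.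

Lemma ones_mass_gt0 n : (0 < n)%N -> 0 < ones_mass n.
Proof. by move=> n_gt0; rewrite divr_gt0 ?invr_gt0 ?rate_gt0 ?ltr0n. Qed.

Lemma fallback_partition n : (1 <= n)%N -> partitions n (fallback n).
Proof.
move=> n_gt0; rewrite /fallback; case: ifP => [n_ge2|n_lt2]; first exact: ones_partition.
by right; split => //; apply/eqP; rewrite eqn_leq n_gt0 andbT leqNgt n_lt2.
Qed.

Lemma ones_neq_singleton n : (2 <= n)%N -> (ones n == [:: n]) = false.
Proof.
move=> n_ge2; apply/negbTE/eqP => /(congr1 size); rewrite size_nseq => n1.
by rewrite n1 in n_ge2.
Qed.

Lemma q_ge0 n l : (1 <= n)%N -> 0 <= q n l.
Proof.
move=> n_gt0; rewrite /q; case: asboolP => // _.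
case: ifP => [/andP[_ small]|_]; last exact: ler0n.
have M_ge0 := total_main_mass_ge0 n_gt0; have e_gt0 := ones_mass_gt0 n_gt0.
rewrite !addr_ge0 ?main_mass_ge0 // mulr_ge0 //; [exact: ltW|lra].
Qed.

Lemma q_out n l : ~ partitions n l -> q n l = 0.
Proof. by rewrite /q; case: asboolP. Qed.

Lemma q_sum1 n : (1 <= n)%N -> \sum_(l \in partitions n) q n l = 1.
Proof.
move=> n_gt0; rewrite fsbig_partitions.
under eq_big_seq => l /[!mem_partitions_seq] /asboolP l_part do rewrite /q asboolT //.
have uniq_n := partitions_seq_uniq n.
case: (admissible n).
  rewrite !big_split /= -/(total_main_mass n).
  rewrite (sum_seq_pick (fun=> ones_mass n) (partitions_seqP (ones_partition n_gt0))) //.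
  rewrite (sum_seq_pick (fun=> 1 - total_main_mass n - ones_mass n)
    (partitions_seqP (singleton_partition n_gt0))) //.
  ring.
rewrite -[RHS](sum_seq_pick (fun=> 1) (partitions_seqP (fallback_partition n_gt0))) //.
by apply: eq_bigr => l _; rewrite mulr1.
Qed.

Lemma q_singleton_lt1 n : (1 <= n)%N -> q n [:: n] < 1.
Proof.
move=> n_gt0; rewrite /q asboolT; last exact: singleton_partition.
case: ifP => [/andP[n_ge2 _]|_].
  rewrite main_mass_singleton // eqxx ones_neq_singleton // mul0r add0r mul1r.
  have := ones_mass_gt0 n_gt0; have := total_main_mass_ge0 n_gt0; lra.
by rewrite /fallback; case: ifP => [n_ge2|_]; rewrite ?ones_neq_singleton //; apply: ltr01.
Qed.

Definition loss_mass := fine (\int[nu]_s (1 - sdval s 0%N)%:E)%E.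

Lemma loss_massE : loss_mass%:E = (\int[nu]_s (1 - sdval s 0%N)%:E)%E.
Proof. by rewrite fineK //; apply: integrable_fin_num (integrable_loss loss_integral_finite). Qed.

Lemma loss_mass_ge0 : 0 <= loss_mass.
Proof. by apply/fine_ge0/integral_ge0 => s _; rewrite lee_fin loss_ge0. Qed.

Lemma total_main_mass_le n : (0 < n)%N -> total_main_mass n <= eps n * loss_mass.
Proof.
move=> n_gt0; have e_gt0 := eps_gt0 n_gt0.
have sum_le : \sum_(l <- partitions_seq n) cut_inv_loss n l * cell_weight nu n l
    <= (eps n)^-1 * loss_mass.
  rewrite -lee_fin (integral_loss_discretize loss_integral_finite) EFinM loss_massE.
  rewrite -integralZl //; last exact: integrable_loss.
  apply: ge0_le_integral => //.
  - by move=> s _; rewrite lee_fin mulr_ge0 ?loss_ge0 ?cut_inv_loss_ge0.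
  - exact: measurable_loss_discretize.
  - apply/measurable_EFinP/measurable_funM; first exact: measurable_cst.
    exact: measurable_loss.
  - by move=> s _; rewrite -EFinM lee_fin mulrC ler_wpM2r ?loss_ge0 ?cut_inv_loss_le.
rewrite /total_main_mass /main_mass -mulr_sumr rate_inv_sqr // -mulrA ler_pM2l //.
by have := ler_wpM2l (ltW e_gt0) sum_le; rewrite mulrA mulfV ?gt_eqF // mul1r.
Qed.

Lemma admissible_near : \forall n \near \oo, admissible n.
Proof.
have C_ge0 := loss_mass_ge0.
have a_gt0 : 0 < (2 * (loss_mass + 1))^-1 by rewrite invr_gt0; lra.
near=> n; have n_ge2 : (2 <= n)%N by near: n; exists 2%N.
have n_gt0 : (0 < n)%N by apply: ltnW.
have e_le : eps n <= (2 * (loss_mass + 1))^-1 by near: n; apply: eps_small.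
have r_le : (rate n)^-1 <= 4^-1 by near: n; apply: rate_inv_small; rewrite invr_gt0.
have o_le : ones_mass n <= (rate n)^-1.
  by rewrite ler_pdivrMr ?ltr0n // ler_peMr ?ler1n ?invr_ge0 ?ltW ?rate_gt0.
have eC_le : eps n * loss_mass <= 2^-1.
  apply: le_trans (_ : (2 * (loss_mass + 1))^-1 * loss_mass <= _).
    by rewrite ler_wpM2r.
  by rewrite mulrC ler_pdivrMr; lra.
by rewrite /admissible n_ge2 /=; have := total_main_mass_le n_gt0; lra.
Unshelve. all: by end_near.
Qed.

Definition ones_term (f : (nat -> R) -> R) n :=
  n%:R^-1 * ((1 - part_scale R n (ones n) 0%N) * f (part_scale R n (ones n))).

Lemma cut_inv_loss_mulr f n l : (0 < n)%N ->
  cut_inv_loss n l * ((1 - part_scale R n l 0%N) * f (part_scale R n l)) =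
  cutoff f (eps n) n l.
Proof.
move=> n_gt0; rewrite /cut_inv_loss /cutoff; case: ifP => cut; last by rewrite mul0r.
by rewrite mulrA mulVf ?mul1r // gt_eqF // (lt_le_trans (eps_gt0 n_gt0) cut).
Qed.

Lemma rate_sum_q f n : admissible n ->
  rate n * \sum_(l \in partitions n) (q n l * (1 - part_scale R n l 0%N) * f (part_scale R n l))
  = \sum_(l <- partitions_seq n) cutoff f (eps n) n l * cell_weight nu n l + ones_term f n.
Proof.
move=> adm; have /andP[n_ge2 _] := adm; have n_gt0 : (0 < n)%N by apply: ltnW.
have rate_inv : rate n * (rate n)^-1 = 1 by rewrite mulfV ?gt_eqF ?rate_gt0.
set X := fun l => (1 - part_scale R n l 0%N) * f (part_scale R n l).
transitivity (rate n * \sum_(l <- partitions_seq n) (main_mass n l * X l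
    + (ones n == l)%:R * (ones_mass n * X l)
    + ([:: n] == l)%:R * ((1 - total_main_mass n - ones_mass n) * X l))).
  congr (_ * _); rewrite fsbig_partitions; apply: eq_big_seq => l.
  by rewrite mem_partitions_seq => /asboolP l_part; rewrite /q asboolT // adm /X; ring.
have uniq_n := partitions_seq_uniq n.
rewrite !big_split /= (sum_seq_pick (fun l => ones_mass n * X l)
  (partitions_seqP (ones_partition n_gt0))) //.
rewrite (sum_seq_pick (fun l => (1 - total_main_mass n - ones_mass n) * X l)
  (partitions_seqP (singleton_partition n_gt0))) //.
have -> : X [:: n] = 0 by rewrite /X /part_scale /= mulfV ?gt_eqF ?ltr0n // subrr mul0r.
rewrite mulr0 addr0 mulrDr; congr (_ + _).
  rewrite /main_mass; under eq_bigr do rewrite -!mulrA.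
  rewrite -mulr_sumr mulrA rate_inv mul1r; apply: eq_bigr => l _.
  by rewrite -(cut_inv_loss_mulr f l n_gt0) /X; ring.
by rewrite /ones_term /ones_mass /X !mulrA rate_inv mul1r.
Qed.

Lemma ones_term_cvg f : bdd_cont_Sdown f -> (fun n => (ones_term f n)%:E) @ \oo --> 0%E.
Proof.
move=> [[M f_le] _]; apply/fine_cvgP; split; first exact: nearW.
apply/cvgrPdist_lt => a a_gt0; near=> n.
have n_gt0 : (0 < n)%N by near: n; exists 1%N.
have Mn : `|M| / n%:R < a by near: n; apply: div_nat_lt.
rewrite /= sub0r normrN; apply: le_lt_trans Mn.
rewrite /ones_term normrM ger0_norm ?invr_ge0 // mulrC ler_wpM2r ?invr_ge0 // normrM.
have t_ones := partition_scale_Sdown R (ones_partition n_gt0).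
have f_le_M : `|f (part_scale R n (ones n))| <= `|M|.
  exact: le_trans (f_le _ t_ones) (ler_norm _).
have loss_le1 : `|1 - part_scale R n (ones n) 0%N| <= 1.
  have [_ /(_ 1%N)] := t_ones; rewrite big_ord1 => t0_le1.
  by rewrite ger0_norm; have := part_scale_ge0 R n (ones n) 0; lra.
by rewrite -[X in _ <= X]mul1r; apply: ler_pM.
Unshelve. all: by end_near.
Qed.

Lemma rate_sum_q_cvg f : bdd_cont_Sdown f ->
  nu [set s : SdownB R | (\sum_(i <oo) (sdval s i)%:E < 1%:E)%E] = 0%E ->
  (fun n => (rate n * \sum_(l \in partitions n)
     (q n l * (1 - part_scale R n l 0%N) * f (part_scale R n l)))%:E) @ \oo -->
  (\int[nu]_s ((1 - sdval s 0%N) * f (sdval s))%:E)%E.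
Proof.
move=> f_bc mass_lt1_null; have zero_fin : (0 : \bar R)%E \is a fin_num by [].
have := cvgeD (fin_num_adde_defl _ zero_fin)
  (cutoff_integral_cvg loss_integral_finite f_bc eps_small mass_lt1_null) (ones_term_cvg f_bc).
rewrite adde0 => sum_cvg; apply: (cvg_trans _ (sum_cvg _)); apply: near_eq_cvg.
near=> n.
have adm : admissible n by near: n; apply: admissible_near.
by rewrite /= rate_sum_q // EFinD (integral_loss_discretize loss_integral_finite).
Unshelve. all: by end_near.
Qed.

End Construction.

Unset Implicit Arguments.

Theorem proposition4 (R : realType) (gamma : R) (nu : {measure set (SdownB R) -> \bar R}) :
  0 < gamma -> dislocation_measure nu ->
  exists q : nat -> seq nat -> R,
    (forall n : nat, (1 <= n)%N ->
       [/\ forall l, 0 <= q n l,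
           forall l, ~ partitions n l -> q n l = 0,
           \sum_(l \in partitions n) q n l = 1
         & q n [:: n] < 1]) /\
    (forall f : (nat -> R) -> R, bdd_cont_Sdown f ->
       ((fun n : nat => ((n%:R `^ gamma) *
            \sum_(l \in partitions n)
               (q n l * (1 - part_scale R n l 0%N) * f (part_scale R n l)))%:E)
         @ \oo --> \int[nu]_s ((1 - sdval s 0%N) * f (sdval s))%:E)%E).
Proof.
move=> gamma_gt0 [_ _ mass_lt1_null loss_integral_finite].
exists (q gamma nu); split => [n n_gt0|f f_bc].
  by split; [move=> l; apply: q_ge0 | apply: q_out | apply: q_sum1 | apply: q_singleton_lt1].
exact: rate_sum_q_cvg.
Qed.
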